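(* Let $n\ge1$. On the class $\mathcal S_n\setminus\{\mathbb R^n,\emptyset\}$, the map $K\mapsto K^c$ is an isometry with respect to the Hausdorff distance, i.e. $d_H(K^c,L^c)=d_H(K,L)$ for all $K,L\in\mathcal S_n\setminus\{\mathbb R^n,\emptyset\}$.
   Context: $B(x,r)$ is the closed Euclidean ball and $B=B(0,1)$. For $A\subseteq\mathbb R^n$, $A^c=\bigcap_{x\in A}B(x,1)$. $\mathcal S_n$ is the class of all sets of the form $\bigcap_{x\in A}B(x,1)$, $A\subseteq\mathbb R^n$. The Hausdorff distance of compact convex sets $K,L$ is $d_H(K,L)=\inf\{\lambda\ge0:K\subseteq L+\lambda B,\ L\subseteq K+\lambda B\}=\sup_{u\in S^{n-1}}|h_K(u)-h_L(u)|$, where $h_K$ is the support function. *)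

From HB Require Import structures.
From mathcomp Require Import all_boot all_order all_algebra.
From mathcomp Require Import all_classical all_reals.
Set Implicit Arguments. Unset Strict Implicit. Unset Printing Implicit Defensive.
Import Order.TTheory GRing.Theory Num.Theory.
Local Open Scope ring_scope.
Local Open Scope classical_set_scope.

Definition edist (R : realType) (n : nat) (x y : 'rV[R]_n) : R :=
  Num.sqrt (\sum_(i < n) (x ord0 i - y ord0 i) ^+ 2).

Definition cball (R : realType) (n : nat) (x : 'rV[R]_n) (r : R) : set 'rV[R]_n :=
  [set y | edist x y <= r].

Definition spconv (R : realType) (n : nat) (A : set 'rV[R]_n) : set 'rV[R]_n :=
  \bigcap_(x in A) cball x 1.

Definition in_Sn (R : realType) (n : nat) (K : set 'rV[R]_n) : Prop :=
  exists A : set 'rV[R]_n, K = spconv A.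

Definition parallel_body (R : realType) (n : nat) (L : set 'rV[R]_n) (l : R) : set 'rV[R]_n :=
  [set y | exists2 z, L z & cball z l y].

Definition hausdorff (R : realType) (n : nat) (K L : set 'rV[R]_n) : R :=
  inf [set l : R | 0 <= l /\ K `<=` parallel_body L l /\ L `<=` parallel_body K l].

(* For K in S_n we have K^cc = K, so it suffices to show that L ⊆ K + lB
   implies K^c ⊆ L^c + lB, and to apply this to (K, L) and to (K^c, L^c).
   A point x of K^c is within 1 + l of every point of L.  Let y be the point
   of L^c nearest to x and u the unit vector from y towards x.  The unit ball
   centred at y - u contains L^c: otherwise, for a point w of L^c outside it,
   the points of the spindle of y and w close to y would lie in L^c and be
   closer to x than y.  Hence y - u lies in L^cc = L, and
   |x - y| + 1 = |x - (y - u)| <= 1 + l. *)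

From Pilot Require Import Defs.
From mathcomp Require Import all_boot all_order all_algebra.
From mathcomp Require Import all_classical all_reals.
From mathcomp Require Import topology normedtype derive.
From mathcomp Require Import ring lra.
Set Implicit Arguments. Unset Strict Implicit. Unset Printing Implicit Defensive.
Import Order.TTheory GRing.Theory Num.Theory.
Import numFieldNormedType.Exports.
Local Open Scope ring_scope.
Local Open Scope classical_set_scope.

Section Euclidean.
Variables (R : realType) (n : nat).
Implicit Types (u v w x y z : 'rV[R]_n) (A C K L : set 'rV[R]_n).

Definition dot u v : R := \sum_(i < n) u ord0 i * v ord0 i.
Definition sqnorm u : R := dot u u.

Lemma dotC u v : dot u v = dot v u.
Proof. by apply: eq_bigr => i _; rewrite mulrC. Qed.

Lemma dotDl u v w : dot (u + v) w = dot u w + dot v w.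
Proof. by rewrite /dot -big_split; apply: eq_bigr => i _; rewrite !mxE mulrDl. Qed.

Lemma dotZl (k : R) u w : dot (k *: u) w = k * dot u w.
Proof. by rewrite /dot mulr_sumr; apply: eq_bigr => i _; rewrite !mxE mulrA. Qed.

Lemma dotDr u v w : dot w (u + v) = dot w u + dot w v.
Proof. by rewrite dotC dotDl !(dotC w). Qed.

Lemma dotZr (k : R) u w : dot w (k *: u) = k * dot w u.
Proof. by rewrite dotC dotZl dotC. Qed.

Lemma dotNr u w : dot w (- u) = - dot w u.
Proof. by rewrite -scaleN1r dotZr mulN1r. Qed.

Lemma dot0l u : dot 0 u = 0.
Proof. by rewrite -(scale0r 0) dotZl mul0r. Qed.

Lemma sqnormD u v : sqnorm (u + v) = sqnorm u + 2 * dot u v + sqnorm v.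
Proof. rewrite /sqnorm dotDl !dotDr (dotC v u); ring. Qed.

Lemma sqnormZ (k : R) u : sqnorm (k *: u) = k ^+ 2 * sqnorm u.
Proof. by rewrite /sqnorm dotZl dotZr mulrA expr2. Qed.

Lemma sqnormN u : sqnorm (- u) = sqnorm u.
Proof. by rewrite -scaleN1r sqnormZ sqrrN expr1n mul1r. Qed.

Lemma sqnormB u v : sqnorm (u - v) = sqnorm (v - u).
Proof. by rewrite -sqnormN opprB. Qed.

Lemma sqnorm_ge0 u : 0 <= sqnorm u.
Proof. by apply: sumr_ge0 => i _; rewrite -expr2 sqr_ge0. Qed.

Lemma sqnorm_le0 u : sqnorm u <= 0 -> u = 0.
Proof.
move=> u_le0; have /eqP : sqnorm u = 0 by apply/eqP; rewrite eq_le u_le0 sqnorm_ge0.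
rewrite psumr_eq0 => [/allP u0|i _]; last by rewrite -expr2 sqr_ge0.
apply/rowP => i; have /implyP := u0 i (mem_index_enum _).
by rewrite mxE mulf_eq0 orbb => /(_ isT) /eqP.
Qed.

Lemma dot_le u v (a b : R) : 0 <= a -> 0 <= b ->
  sqnorm u <= a ^+ 2 -> sqnorm v <= b ^+ 2 -> dot u v <= a * b.
Proof.
move=> a0 b0 ua vb; have := sqnorm_ge0 (b *: u - a *: v).
rewrite sqnormD sqnormN dotNr dotZl dotZr !sqnormZ.
have [ab0|] := ltrP 0 (a * b).
  have : b ^+ 2 * sqnorm u <= b ^+ 2 * a ^+ 2 by rewrite ler_wpM2l ?sqr_ge0.
  have : a ^+ 2 * sqnorm v <= a ^+ 2 * b ^+ 2 by rewrite ler_wpM2l ?sqr_ge0.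
  nra.
move=> ab_le0 _; have /eqP : a * b = 0 by apply/eqP; rewrite eq_le ab_le0 mulr_ge0.
rewrite mulf_eq0 => /orP[] /eqP ab0.
  by move: ua; rewrite ab0 expr0n => /sqnorm_le0 ->; rewrite dot0l mul0r.
by move: vb; rewrite ab0 expr0n => /sqnorm_le0 ->; rewrite dotC dot0l mulr0.
Qed.

Lemma sqnormD_le u v (a b : R) : 0 <= a -> 0 <= b ->
  sqnorm u <= a ^+ 2 -> sqnorm v <= b ^+ 2 -> sqnorm (u + v) <= (a + b) ^+ 2.
Proof. by move=> a0 b0 ua vb; have := dot_le a0 b0 ua vb; rewrite sqnormD; nra. Qed.

Lemma continuous_sqnormB z : continuous (fun v => sqnorm (v - z)).
Proof.
rewrite /sqnorm /dot.
apply: continuous_big => [|i _ v]; first exact: add_continuous.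
have coord_z : continuous (fun v : 'rV[R]_n => (v - z) ord0 i).
  have -> : (fun v : 'rV[R]_n => (v - z) ord0 i) = (fun v => v ord0 i - z ord0 i).
    by apply/funext => w; rewrite !mxE.
  by move=> w; apply: continuousB; [exact: coord_continuous | exact: cst_continuous].
exact: continuousM (coord_z v) (coord_z v).
Qed.

Lemma exists_nearest C x : closed C -> C !=set0 ->
  exists2 y, C y & forall w, C w -> sqnorm (x - y) <= sqnorm (x - w).
Proof.
move=> Ccl [y0 Cy0]; pose f v := sqnorm (v - x).
pose D := C `&` f @^-1` [set t | t <= f y0].
have Dcl : closed D.
  apply: closedI => //; apply: preimage_closed; last exact: closed_le.
  by move=> ? _; exact: continuous_sqnormB.
have Dcompact : compact D.
  pose box i := `[x ord0 i - (f y0 + 1), x ord0 i + (f y0 + 1)]%classic.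
  have box_compact := @rV_compact R n box (fun i => @segment_compact R _ _).
  apply: (subclosed_compact Dcl box_compact).
  move=> v [_ /= fv] i; rewrite /box /= in_itv /=.
  have fy0 : 0 <= f y0 := sqnorm_ge0 _.
  have : (v ord0 i - x ord0 i) ^+ 2 <= f v.
    rewrite /f /sqnorm /dot (bigD1 i) //= !mxE -expr2 lerDl.
    by apply: sumr_ge0 => j _; rewrite !mxE -expr2 sqr_ge0.
  by move=> vi; apply/andP; split; nra.
have [y Dy ymin] := compact_EVT_min (ex_intro _ y0 (conj Cy0 (lexx _)) : D !=set0)
  Dcompact (continuous_subspaceT (@continuous_sqnormB x)).
move: Dy; rewrite inE => -[Cy fy]; exists y => // w Cw.
rewrite (sqnormB x y) (sqnormB x w) -/(f y) -/(f w).
have [fw|fw] := lerP (f w) (f y0); last by move: fy => /=; lra.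
by apply: ymin; rewrite inE.
Qed.

Lemma edist_le x y (r : R) : 0 <= r ->
  (Defs.edist x y <= r) = (sqnorm (x - y) <= r ^+ 2).
Proof.
move=> r0; rewrite -[LHS]ler_sqr ?nnegrE ?sqrtr_ge0 // sqr_sqrtr ?sumr_ge0 //.
  by congr (_ <= _); apply: eq_bigr => i _; rewrite !mxE expr2.
by move=> i _; rewrite sqr_ge0.
Qed.

Lemma edistC x y : Defs.edist x y = Defs.edist y x.
Proof. by congr Num.sqrt; apply: eq_bigr => i _; rewrite -sqrrN opprB. Qed.

Lemma spconvP A y : spconv A y <-> forall z, A z -> sqnorm (z - y) <= 1.
Proof.
have cballE z : cball z 1 y <-> sqnorm (z - y) <= 1.
  by rewrite /cball /= edist_le // expr1n.
by split=> Ay z Az; apply/cballE; exact: Ay.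
Qed.

Lemma closed_spconv A : closed (spconv A).
Proof.
apply: closed_bigI => z _; rewrite /cball.
have -> : [set y | Defs.edist z y <= 1] = (fun y => sqnorm (y - z)) @^-1` [set t | t <= 1].
  by apply/seteqP; split => y /=; rewrite edist_le // expr1n sqnormB.
apply: preimage_closed; last exact: closed_le.
by move=> ? _; exact: continuous_sqnormB.
Qed.

Lemma spconvS A B : A `<=` B -> spconv B `<=` spconv A.
Proof. by move=> AB y By z /AB; exact: By. Qed.

Lemma sub_spconv2 A : A `<=` spconv (spconv A).
Proof. by move=> a Aa z Az; rewrite /cball /= edistC; exact: Az. Qed.

Lemma spconv3 A : spconv (spconv (spconv A)) = spconv A.
Proof. by apply/seteqP; split; [exact/spconvS/sub_spconv2 | exact: sub_spconv2]. Qed.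

Lemma Sn_spconv2 K : in_Sn K -> spconv (spconv K) = K.
Proof. by move=> [A ->]; exact: spconv3. Qed.

Lemma Sn_spconv_neq0 K : in_Sn K -> K <> setT -> spconv K !=set0.
Proof.
move=> [A ->] KT; have [[a Aa]|/set0P/negP/negPn/eqP A0] := pselect (A !=set0).
  by exists a; exact: sub_spconv2.
by exfalso; apply: KT; apply/seteqP; split=> // y _ z; rewrite A0.
Qed.

Lemma spconv_spindle L y w u (c s : R) :
  spconv L y -> spconv L w -> sqnorm u <= 1 -> 0 <= c -> 0 <= s <= 1 ->
  s * sqnorm (w - y + c *: u) <= sqnorm (w - y) - 2 * c ->
  spconv L (y + s *: (w - y + c *: u)).
Proof.
move=> Ly Lw u1 c0 /andP[s0 s1] sV; apply/spconvP => z Lz.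
have /spconvP/(_ z Lz) := Ly; have /spconvP/(_ z Lz) := Lw.
rewrite (sqnormB z y) (sqnormB z w).
set a := y - z; set d := w - y in sV *; set v := d + c *: u in sV *.
have -> : w - z = a + d by apply/rowP => i; rewrite !mxE; ring.
have -> : z - (y + s *: v) = - (a + s *: v) by apply/rowP => i; rewrite !mxE; ring.
rewrite sqnormN (sqnormD a d) (sqnormD a (s *: v)) sqnormZ dotZr /v dotDr dotZr -/v.
move=> ad1 a1.
(* <a, u> <= 1, so |a + s v|^2 <= (1 - s) |a|^2 + s <= 1. *)
have := sqnorm_ge0 (a - u); rewrite sqnormD sqnormN dotNr => au.
set A := sqnorm a in ad1 a1 au *; set P := dot a d in ad1 *; set Q := dot a u in au *.
set D := sqnorm d in ad1 sV *; set V := sqnorm v in sV *.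
have : s * (2 * P) <= s * (1 - A - D) by apply: ler_wpM2l => //; lra.
have : (s * c) * Q <= (s * c) * 1 by apply: ler_wpM2l; [exact: mulr_ge0 | lra].
have : s * (s * V) <= s * (D - 2 * c) by exact: ler_wpM2l.
have : A * s <= s by nra.
nra.
Qed.

Lemma nearest_spconv_supporting L y u (e : R) :
  spconv L y -> sqnorm u = 1 -> 0 < e ->
  (forall w, spconv L w -> e ^+ 2 <= sqnorm (y + e *: u - w)) ->
  spconv (spconv L) (y - u).
Proof.
move=> Ly u1 e0 ymin; apply/spconvP => w Lw; rewrite leNgt; apply/negP => far.
have wyu : w - (y - u) = (w - y) + u by apply/rowP => i; rewrite !mxE; ring.
rewrite wyu sqnormD u1 in far.
set d := w - y in wyu far *; set D := sqnorm d in far; set g := dot d u in far.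
have D0 : 0 <= D := sqnorm_ge0 d.
have [c [c0 gc cD]] : exists c : R, [/\ 0 <= c, - g < c & 2 * c < D].
  have [g0|g0] := ltrP 0 g; last by exists (D / 4 - g / 2); split; lra.
  exists 0; split; rewrite ?mulr0 ?oppr_lt0 // lt_neqAle D0 andbT eq_sym.
  apply: contraTneq g0 => D_eq0; have d0 : d = 0 by apply: sqnorm_le0; rewrite -/D D_eq0.
  by rewrite /g d0 dot0l ltxx.
set v := d + c *: u; set V := sqnorm v.
have V0 : 0 <= V := sqnorm_ge0 v.
have gcv : dot v u = g + c by rewrite /v dotDl dotZl -/g [dot u u]u1 mulr1.
have [s [s0 s1 sVD sVe]] : exists s : R,
    [/\ 0 < s, s <= 1, s * V <= D - 2 * c & s * V < 2 * e * (g + c)].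
  pose k := Num.min 1 (Num.min (D - 2 * c) (e * (g + c))).
  have k0 : 0 < k by rewrite !lt_min ltr01 subr_gt0 cD mulr_gt0 //; lra.
  have : k <= 1 /\ k <= D - 2 * c /\ k <= e * (g + c).
    by rewrite !ge_min !lexx !orbT.
  move=> [k1 [kD ke]]; exists (k / (V + 1)).
  have kV : k / (V + 1) * V <= k.
    by rewrite mulrAC ler_pdivrMr; [nra | lra].
  split; [apply: divr_gt0; lra | rewrite ler_pdivrMr; nra | lra | nra].
have Lp : spconv L (y + s *: v).
  by apply: spconv_spindle; rewrite ?u1 ?(ltW s0) //.
have := ymin _ Lp.
have -> : y + e *: u - (y + s *: v) = e *: u - s *: v.
  by apply/rowP => i; rewrite !mxE; ring.
rewrite sqnormD sqnormN dotNr dotZl dotZr dotC gcv !sqnormZ u1 -/V.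
have : s * (s * V) < s * (2 * e * (g + c)) by rewrite ltr_pM2l.
nra.
Qed.

Lemma mem_parallel_spconv L x (d : R) :
  spconv (spconv L) = L -> spconv L !=set0 -> 0 <= d ->
  (forall z, L z -> sqnorm (x - z) <= (1 + d) ^+ 2) ->
  parallel_body (spconv L) d x.
Proof.
move=> LK L0 d0 xL.
have [y Ly ymin] := exists_nearest x (@closed_spconv L) L0.
exists y => //; rewrite /cball /= edist_le // sqnormB leNgt; apply/negP => far.
set e := Num.sqrt (sqnorm (x - y)) in far.
have e2 : e ^+ 2 = sqnorm (x - y) by rewrite sqr_sqrtr ?sqnorm_ge0.
have e0 : 0 < e by rewrite sqrtr_gt0; nra.
set u := e^-1 *: (x - y).
have xE : x = y + e *: u by rewrite scalerA mulfV ?gt_eqF // scale1r addrC subrK.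
have u1 : sqnorm u = 1 by rewrite sqnormZ -e2 exprVn mulVf // expf_neq0 ?gt_eqF.
have Lyu : L (y - u).
  rewrite -LK; apply: (nearest_spconv_supporting Ly u1 e0) => w Lw.
  by rewrite -xE e2; exact: ymin.
have := xL _ Lyu.
have -> : x - (y - u) = (e + 1) *: u by rewrite xE; apply/rowP => i; rewrite !mxE; ring.
rewrite sqnormZ u1 mulr1 => ed.
have : e <= d by nra.
nra.
Qed.

Lemma spconv_parallel_sub K L (l : R) :
  spconv (spconv L) = L -> spconv L !=set0 -> 0 <= l ->
  L `<=` parallel_body K l -> spconv K `<=` parallel_body (spconv L) l.
Proof.
move=> LK L0 l0 LKl x Kx; apply: mem_parallel_spconv => // z /LKl[w Kw wz].
have -> : x - z = (x - w) + (w - z) by rewrite addrA subrK.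
apply: sqnormD_le => //; last by rewrite -edist_le.
by rewrite expr1n sqnormB; move/spconvP: Kx; exact.
Qed.

End Euclidean.

Theorem proposition2p4 (R : realType) (n : nat) (hn : (1 <= n)%N)
  (K L : set 'rV[R]_n) :
  in_Sn K -> K <> setT -> K <> set0 ->
  in_Sn L -> L <> setT -> L <> set0 ->
  hausdorff (spconv K) (spconv L) = hausdorff K L.
Proof.
move=> SK KT K0 SL LT L0.
have [KK LL] := (Sn_spconv2 SK, Sn_spconv2 SL).
have [cK0 cL0] := (Sn_spconv_neq0 SK KT, Sn_spconv_neq0 SL LT).
have [ccK0 ccL0] : spconv (spconv K) !=set0 /\ spconv (spconv L) !=set0.
  by rewrite KK LL; split; apply/set0P/eqP.
rewrite /hausdorff; congr inf; apply/seteqP; split=> l [l0 [KL LK]].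
  by split=> //; split; rewrite -KK -LL; apply: spconv_parallel_sub; rewrite ?spconv3.
by split=> //; split; exact: spconv_parallel_sub.
Qed.
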